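(* If $J$ is a subcomplex of a simplicial complex $K$ which is flag and full in $K$, then $J$ is a 3-convex subcomplex of $K'_J$. In particular, if $J$ is a full subcomplex of a flag complex $K$, then $J$ is 3-convex in $K'_J$.
   Context: $K'_J$ (barycentric subdivision of $K$ relative to $J$): vertices are vertices of $J$ and barycenters $b(\sigma)$ of simplices $\sigma$ of $K$ not in $J$; simplices are spanned by sets $\{v_1,\dots,v_q,b(\sigma_1),\dots,b(\sigma_p)\}$ with $v_1,\dots,v_q$ spanning a simplex $\tau$ of $J$ (possibly empty), $\sigma_i\not\subset J$, and $\tau\subset\sigma_1\subset\dots\subset\sigma_p$. A subcomplex $J\subset L$ is 3-convex if it is full and for any two vertices of $J$ at edge-path distance 2 in $L$, every edge path of length 2 in $L$ joining them lies in $J$. *)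

(* Abstract simplicial complexes on an arbitrary vertex type V:
   a simplex is a (finite, nonempty) set of vertices, represented as a
   predicate V -> Prop; a complex is a predicate on such sets. *)
From Stdlib Require Import List.

Definition finite_set {T : Type} (s : T -> Prop) : Prop :=
  exists l : list T, forall x, s x -> In x l.
Definition nonempty {T : Type} (s : T -> Prop) : Prop := exists x, s x.
Definition subset {T : Type} (s t : T -> Prop) : Prop := forall x, s x -> t x.
Definition single {T : Type} (v : T) : T -> Prop := fun x => x = v.
Definition pair {T : Type} (a b : T) : T -> Prop := fun x => x = a \/ x = b.

Definition is_complex {V : Type} (K : (V -> Prop) -> Prop) : Prop :=
  (forall s, K s -> finite_set s /\ nonempty s) /\
  (forall s t, K s -> subset t s -> nonempty t -> K t).

Definition subcomplex {V : Type} (J K : (V -> Prop) -> Prop) : Prop :=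
  is_complex J /\ (forall s, J s -> K s).

Definition full {V : Type} (L M : (V -> Prop) -> Prop) : Prop :=
  forall s, L s -> (forall v, s v -> M (single v)) -> M s.

Definition flag {V : Type} (K : (V -> Prop) -> Prop) : Prop :=
  forall s, finite_set s -> nonempty s ->
    (forall v, s v -> K (single v)) ->
    (forall u v, s u -> s v -> u <> v -> K (pair u v)) -> K s.

Definition edge {W : Type} (L : (W -> Prop) -> Prop) (a b : W) : Prop :=
  a <> b /\ L (pair a b).
Definition dist2 {W : Type} (L : (W -> Prop) -> Prop) (a c : W) : Prop :=
  a <> c /\ ~ L (pair a c) /\ exists b, edge L a b /\ edge L b c.

Definition three_convex {W : Type} (L M : (W -> Prop) -> Prop) : Prop :=
  (forall s, M s -> L s) /\ full L M /\
  forall a c, M (single a) -> M (single c) -> dist2 L a c ->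
    forall b, edge L a b -> edge L b c -> M (pair a b) /\ M (pair b c).

(* Barycentric subdivision K'_J of K relative to J.  Vertices: inl v for
   vertices v of J, and inr sigma standing for the barycenter b(sigma) of a
   simplex sigma of K not in J. *)
Definition rel_bsd {V : Type} (K J : (V -> Prop) -> Prop)
  : ((V + (V -> Prop)) -> Prop) -> Prop :=
  fun S =>
    finite_set S /\ nonempty S /\
    (~ nonempty (fun v => S (inl v)) \/ J (fun v => S (inl v))) /\
    (forall sigma, S (inr sigma) ->
        K sigma /\ ~ J sigma /\ subset (fun v => S (inl v)) sigma) /\
    (forall s1 s2, S (inr s1) -> S (inr s2) -> subset s1 s2 \/ subset s2 s1).

Definition inl_image {V : Type} (J : (V -> Prop) -> Prop)
  : ((V + (V -> Prop)) -> Prop) -> Prop :=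
  fun S => exists tau, J tau /\
    forall x, S x <-> exists v, tau v /\ x = inl v.

(* In [K'_J] the only vertices adjacent to two vertices [u], [w] of [J] are
   vertices of [J] and barycenters [b(sigma)] with [u, w] in [sigma].  A path
   through a barycenter therefore makes [uw] an edge of [K], hence of [J] by
   fullness, so [u] and [w] are adjacent and not at distance 2; every path of
   length 2 between vertices of [J] at distance 2 thus runs through [J]. *)
From Stdlib Require Import List FunctionalExtensionality PropExtensionality.

Lemma pred_ext {T : Type} (s t : T -> Prop) : (forall x, s x <-> t x) -> s = t.
Proof.
  intro H; apply functional_extensionality; intro x.
  apply propositional_extensionality; auto.
Qed.

Section RelativeSubdivision.
Variables (V : Type) (K J : (V -> Prop) -> Prop).

Notation vertex := (V + (V -> Prop))%type.

Lemma inl_image_rel_bsd (S : vertex -> Prop) :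
  subcomplex J K -> inl_image J S -> rel_bsd K J S.
Proof.
  intros HJ [tau [Jtau HS]].
  assert (Etau : (fun v => S (inl v)) = tau).
  { apply pred_ext; intro v; split.
    - intro Hv; destruct (proj1 (HS _) Hv) as [v' [Hv' e]].
      injection e; intros <-; exact Hv'.
    - intro Hv; apply HS; eauto. }
  destruct (proj1 (proj1 HJ) tau Jtau) as [[l Hl] [v0 Hv0]].
  split; [|split; [|split; [|split]]].
  - exists (map inl l); intros x Hx.
    destruct (proj1 (HS x) Hx) as [v [Hv ->]]; apply in_map; auto.
  - exists (inl v0); apply HS; eauto.
  - right; rewrite Etau; exact Jtau.
  - intros s Hs; destruct (proj1 (HS _) Hs) as [v [_ e]]; discriminate.
  - intros s1 s2 Hs; destruct (proj1 (HS _) Hs) as [v [_ e]]; discriminate.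
Qed.

Lemma rel_bsd_inl_image (S : vertex -> Prop) :
  rel_bsd K J S -> (forall x, S x -> exists v, x = inl v) -> inl_image J S.
Proof.
  intros [_ [[x Hx] [HJ _]]] Hinl.
  exists (fun v => S (inl v)); split.
  - destruct HJ as [Hempty | HJ]; [exfalso | exact HJ].
    apply Hempty; destruct (Hinl x Hx) as [v ->]; exists v; exact Hx.
  - intro y; split.
    + intro Hy; destruct (Hinl y Hy) as [v ->]; eauto.
    + intros [v [Hv ->]]; exact Hv.
Qed.

Lemma inl_image_single (a : vertex) :
  inl_image J (single a) -> exists u, a = inl u /\ J (single u).
Proof.
  intros [tau [Jtau H]].
  destruct (proj1 (H a) eq_refl) as [u [Hu ->]].
  exists u; split; [reflexivity|].
  replace (single u) with tau; [exact Jtau|].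
  apply pred_ext; intro x; split.
  - intro Hx; pose proof (proj2 (H (inl x)) (ex_intro _ x (conj Hx eq_refl))) as e.
    injection e; auto.
  - intros ->; exact Hu.
Qed.

Lemma inl_image_pair (u w : V) :
  J (pair u w) -> inl_image J (pair (inl u) (inl w)).
Proof.
  intro Juw; exists (pair u w); split; [exact Juw|].
  intro x; split.
  - intros [-> | ->]; [exists u | exists w]; (split; [|reflexivity]); [left | right]; reflexivity.
  - intros [v [[-> | ->] ->]]; [left | right]; reflexivity.
Qed.

Lemma rel_bsd_barycenter_edge (u w : V) (sigma : V -> Prop) :
  is_complex K ->
  rel_bsd K J (pair (inl u) (inr sigma)) ->
  rel_bsd K J (pair (inr sigma) (inl w)) -> K (pair u w).
Proof.
  intros HK [_ [_ [_ [Hu _]]]] [_ [_ [_ [Hw _]]]].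
  destruct (Hu sigma (or_intror eq_refl)) as [Ksigma [_ u_in]].
  destruct (Hw sigma (or_introl eq_refl)) as [_ [_ w_in]].
  apply (proj2 HK sigma); [exact Ksigma | | exists u; left; reflexivity].
  intros z [-> | ->]; [apply u_in; left | apply w_in; right]; reflexivity.
Qed.

Lemma full_rel_bsd_inl_image :
  subcomplex J K -> full (rel_bsd K J) (inl_image J).
Proof.
  intros HJ S HS Hsingle.
  apply rel_bsd_inl_image; [exact HS|].
  intros x Hx; destruct (inl_image_single x (Hsingle x Hx)) as [u [-> _]]; eauto.
Qed.

Lemma three_convex_rel_bsd :
  is_complex K -> subcomplex J K -> full K J ->
  three_convex (rel_bsd K J) (inl_image J).
Proof.
  intros HK HJ Hfull; split; [|split].
  - intros S; apply inl_image_rel_bsd; exact HJ.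
  - apply full_rel_bsd_inl_image; exact HJ.
  - intros a c Ha Hc [_ [not_adj _]] b [_ Hab] [_ Hbc].
    destruct (inl_image_single a Ha) as [u [-> Ju]].
    destruct (inl_image_single c Hc) as [w [-> Jw]].
    destruct b as [x | sigma].
    + split; apply rel_bsd_inl_image; auto; intros y [-> | ->]; eauto.
    + exfalso; apply not_adj.
      apply inl_image_rel_bsd; [exact HJ|]; apply inl_image_pair.
      apply Hfull; [eapply rel_bsd_barycenter_edge; eauto|].
      intros v [-> | ->]; assumption.
Qed.

End RelativeSubdivision.

Theorem lemma4p5 (V : Type) (K J : (V -> Prop) -> Prop)
  (HK : is_complex K) (HJ : subcomplex J K) :
  (flag J -> full K J -> three_convex (rel_bsd K J) (inl_image J)) /\
  (flag K -> full K J -> three_convex (rel_bsd K J) (inl_image J)).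
Proof.
  split; intros _; apply three_convex_rel_bsd; assumption.
Qed.
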